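(* Let $B$ be a transitive relation on $\mathcal{SC}$. Then for all $\sigma_1,\sigma_2\in\mathcal{SC}$, $\sigma_1\preceq_B\sigma_2$ implies $\sigma_1\sqsubseteq_B\sigma_2$.
   Context: Fix base types $BT$ with preorder $\leq_{\mathsf b}$ and labels $\mathcal L$. Contract terms: $\sigma::=\mathbf 1\mid ?\mathtt t.\sigma\mid !\mathtt t.\sigma\mid !(\sigma).\sigma\mid ?(\sigma).\sigma\mid \sum_{i\in I}?l_i.\sigma_i\mid \bigoplus_{i\in I}!l_i.\sigma_i\mid \mu x.\sigma\mid x$ ($I$ finite nonempty, labels distinct). $\mathcal{SC}$ = closed guarded terms (guarded: in each $\mu x.\sigma'$, $x$ occurs in $\sigma'$ only under constructors other than $\mu$). $\mathrm{unfold}(\mu x.\sigma')=\mathrm{unfold}(\sigma'[\mu x.\sigma'/x])$, otherwise $\mathrm{unfold}(\sigma)=\sigma$. LTS: $\mathbf 1\xrightarrow\checkmark$; $\lambda.\sigma\xrightarrow\lambda\sigma$ for prefixes (including $!l.\sigma$); $\bigoplus_{i\in I}!l_i.\sigma_i\xrightarrow\tau!l_i.\sigma_i$ for $|I|>1$; $\sum ?l_i.\sigma_i\xrightarrow{?l_i}\sigma_i$; $\mu x.\sigma\xrightarrow\tau\sigma[\mu x.\sigma/x]$. For $B\subseteq\mathcal{SC}^2$: $\lambda_1\bowtie_B\lambda_2$ iff the pair is $(!l,?l)$, $(?l,!l)$, $(!\mathtt t_1,?\mathtt t_2)$ with $\mathtt t_1\leq_{\mathsf b}\mathtt t_2$,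 $(?\mathtt t_1,!\mathtt t_2)$ with $\mathtt t_2\leq_{\mathsf b}\mathtt t_1$, $(!(\sigma_1),?(\sigma_2))$ with $\sigma_1B\sigma_2$, $(?(\sigma_1),!(\sigma_2))$ with $\sigma_2B\sigma_1$. $\rho\|\sigma\xrightarrow\tau_B$ by a $\tau$ of either side, or synchronisation $\rho\xrightarrow{\lambda_1}\rho'$, $\sigma\xrightarrow{\lambda_2}\sigma'$, $\lambda_1\bowtie_B\lambda_2$ giving $\rho'\|\sigma'$. $\dashv_B$: greatest $R$ with $\rho R\sigma$ implying (i) if $\rho\|\sigma$ has no $\xrightarrow\tau_B$ move then $\rho\xrightarrow\checkmark$, $\sigma\xrightarrow\checkmark$; (ii) every $\rho\|\sigma\xrightarrow\tau_B\rho'\|\sigma'$ has $\rho'R\sigma'$. $\sigma_1\sqsubseteq_B\sigma_2$ iff $\forall\rho$, $\rho\dashv_B\sigma_1\Rightarrow\rho\dashv_B\sigma_2$. Syntactic preorder: for $R,B\subseteq\mathcal{SC}^2$, $\mathcal S(R,B)$ is the set of $(\sigma_1,\sigma_2)$ satisfying all of: if $\mathrm{unfold}(\sigma_1)=\mathbf 1$ then $\mathrm{unfold}(\sigma_2)=\mathbf 1$; if $\mathrm{unfold}(\sigma_1)=?\mathtt t_1.\sigma_1'$ then $\mathrm{unfold}(\sigma_2)=?\mathtt t_2.\sigma_2'$ with $\sigma_1'R\sigma_2'$, $\mathtt t_1\leq_{\mathsf b}\mathtt t_2$; if $\mathrm{unfold}(\sigma_1)=!\mathtt t_1.\sigma_1'$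 then $\mathrm{unfold}(\sigma_2)=!\mathtt t_2.\sigma_2'$ with $\sigma_1'R\sigma_2'$, $\mathtt t_2\leq_{\mathsf b}\mathtt t_1$; if $\mathrm{unfold}(\sigma_1)=!(\sigma^m_1).\sigma_1'$ then $\mathrm{unfold}(\sigma_2)=!(\sigma^m_2).\sigma_2'$ with $\sigma_1'R\sigma_2'$, $\sigma^m_2B\sigma^m_1$; if $\mathrm{unfold}(\sigma_1)=?(\sigma^m_1).\sigma_1'$ then $\mathrm{unfold}(\sigma_2)=?(\sigma^m_2).\sigma_2'$ with $\sigma_1'R\sigma_2'$, $\sigma^m_1B\sigma^m_2$; if $\mathrm{unfold}(\sigma_1)=\sum_{i\in I}?l_i.\sigma^1_i$ then $\mathrm{unfold}(\sigma_2)=\sum_{j\in J}?l_j.\sigma^2_j$ with $I\subseteq J$ and $\sigma^1_iR\sigma^2_i$ for $i\in I$; if $\mathrm{unfold}(\sigma_1)=\bigoplus_{i\in I}!l_i.\sigma^1_i$ then $\mathrm{unfold}(\sigma_2)=\bigoplus_{j\in J}!l_j.\sigma^2_j$ with $J\subseteq I$ and $\sigma^1_jR\sigma^2_j$ for $j\in J$. $\preceq_B$ is the greatest $R$ with $R\subseteq\mathcal S(R,B)$. *)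

From Stdlib Require Import List Arith Bool.
Import ListNotations.

Set Implicit Arguments.

Section Contracts.

(* BT : base types, with preorder [leb] ; L : labels *)
Context {BT L : Type}.

(* Contract terms; recursion variables are named by nat.
   [Ext ps] is the external choice  sum_{i} ?l_i.s_i  (?l.s is Ext [(l,s)]),
   [Int ps] is the internal choice  oplus_{i} !l_i.s_i (!l.s is Int [(l,s)]). *)
Inductive contract : Type :=
| One : contract
| InT : BT -> contract -> contract
| OutT : BT -> contract -> contract
| OutS : contract -> contract -> contract
| InS : contract -> contract -> contract
| Ext : list (L * contract) -> contract
| Int : list (L * contract) -> contract
| Mu : nat -> contract -> contract
| Var : nat -> contract.

Fixpoint occurs_free (x : nat) (t : contract) : bool :=
  match t with
  | One => false
  | InT _ s | OutT _ s => occurs_free x s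
  | OutS m s | InS m s => occurs_free x m || occurs_free x s
  | Ext ps | Int ps => existsb (fun p => occurs_free x (snd p)) ps
  | Mu y s => if Nat.eqb x y then false else occurs_free x s
  | Var y => Nat.eqb x y
  end.

Fixpoint unguarded (x : nat) (t : contract) : bool :=
  match t with
  | Var y => Nat.eqb x y
  | Mu y s => if Nat.eqb x y then false else unguarded x s
  | _ => false
  end.

(* guarded: in each Mu x s, x occurs in s only under constructors other than Mu;
   also includes well-formedness of choices: nonempty, pairwise distinct labels *)
Fixpoint guarded_wf (t : contract) : Prop :=
  match t with
  | One | Var _ => True
  | InT _ s | OutT _ s => guarded_wf s
  | OutS m s | InS m s => guarded_wf m /\ guarded_wf s
  | Ext ps | Int ps =>
      ps <> [] /\ NoDup (map fst ps) /\
      fold_right (fun p acc => guarded_wf (snd p) /\ acc) True ps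
  | Mu x s => unguarded x s = false /\ guarded_wf s
  end.

Definition closed (t : contract) : Prop := forall x, occurs_free x t = false.

Definition SC (t : contract) : Prop := closed t /\ guarded_wf t.

(* substitution t[u/x] (only used with u closed, so no capture) *)
Fixpoint subst (u : contract) (x : nat) (t : contract) : contract :=
  match t with
  | One => One
  | InT b s => InT b (subst u x s)
  | OutT b s => OutT b (subst u x s)
  | OutS m s => OutS (subst u x m) (subst u x s)
  | InS m s => InS (subst u x m) (subst u x s)
  | Ext ps => Ext (map (fun p => (fst p, subst u x (snd p))) ps)
  | Int ps => Int (map (fun p => (fst p, subst u x (snd p))) ps)
  | Mu y s => if Nat.eqb x y then Mu y s else Mu y (subst u x s)
  | Var y => if Nat.eqb x y then u else Var y
  end.

(* unfold, as the relation defined by its recursive equations: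
   unfold(Mu x s) = unfold(s[Mu x s/x]); unfold(t) = t otherwise *)
Inductive Unfold : contract -> contract -> Prop :=
| Unfold_mu : forall x s t, Unfold (subst (Mu x s) x s) t -> Unfold (Mu x s) t
| Unfold_other : forall t, (forall x s, t <> Mu x s) -> Unfold t t.

Inductive act : Type :=
| Chk : act
| Tau : act
| AInT : BT -> act | AOutT : BT -> act
| AInL : L -> act | AOutL : L -> act
| AInS : contract -> act | AOutS : contract -> act.

Inductive step : contract -> act -> contract -> Prop :=
| st_one : step One Chk One
| st_inT : forall b s, step (InT b s) (AInT b) s
| st_outT : forall b s, step (OutT b s) (AOutT b) s
| st_outS : forall m s, step (OutS m s) (AOutS m) s
| st_inS : forall m s, step (InS m s) (AInS m) s
| st_outL : forall l s, step (Int [(l, s)]) (AOutL l) s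
| st_int : forall ps l s, 1 < length ps -> In (l, s) ps ->
    step (Int ps) Tau (Int [(l, s)])
| st_ext : forall ps l s, In (l, s) ps -> step (Ext ps) (AInL l) s
| st_mu : forall x s, step (Mu x s) Tau (subst (Mu x s) x s).

Variable leb : BT -> BT -> Prop.

Definition dual (B : contract -> contract -> Prop) (a1 a2 : act) : Prop :=
  match a1, a2 with
  | AOutL l1, AInL l2 => l1 = l2
  | AInL l1, AOutL l2 => l1 = l2
  | AOutT t1, AInT t2 => leb t1 t2
  | AInT t1, AOutT t2 => leb t2 t1
  | AOutS s1, AInS s2 => B s1 s2
  | AInS s1, AOutS s2 => B s2 s1
  | _, _ => False
  end.

Inductive par_tau (B : contract -> contract -> Prop)
  : contract -> contract -> contract -> contract -> Prop :=
| pt_left : forall r r' s, step r Tau r' -> par_tau B r s r' s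
| pt_right : forall r s s', step s Tau s' -> par_tau B r s r s'
| pt_sync : forall r r' s s' a1 a2,
    step r a1 r' -> step s a2 s' -> dual B a1 a2 -> par_tau B r s r' s'.

(* R is a compliance relation (post-fixed point of the defining functional) *)
Definition compliance_rel (B R : contract -> contract -> Prop) : Prop :=
  (forall r s, R r s -> SC r /\ SC s) /\
  (forall r s, R r s ->
     ((forall r' s', ~ par_tau B r s r' s') ->
        (exists r1, step r Chk r1) /\ (exists s1, step s Chk s1)) /\
     (forall r' s', par_tau B r s r' s' -> R r' s')).

(* rho ⊣_B sigma : membership in the greatest such relation *)
Definition compliant (B : contract -> contract -> Prop) (r s : contract) : Prop :=
  exists R, compliance_rel B R /\ R r s.

Definition subcontract (B : contract -> contract -> Prop) (s1 s2 : contract) : Prop :=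
  forall r, SC r -> compliant B r s1 -> compliant B r s2.

Definition Sfun (R B : contract -> contract -> Prop) (s1 s2 : contract) : Prop :=
  (Unfold s1 One -> Unfold s2 One) /\
  (forall t1 s1', Unfold s1 (InT t1 s1') ->
     exists t2 s2', Unfold s2 (InT t2 s2') /\ R s1' s2' /\ leb t1 t2) /\
  (forall t1 s1', Unfold s1 (OutT t1 s1') ->
     exists t2 s2', Unfold s2 (OutT t2 s2') /\ R s1' s2' /\ leb t2 t1) /\
  (forall m1 s1', Unfold s1 (OutS m1 s1') ->
     exists m2 s2', Unfold s2 (OutS m2 s2') /\ R s1' s2' /\ B m2 m1) /\
  (forall m1 s1', Unfold s1 (InS m1 s1') ->
     exists m2 s2', Unfold s2 (InS m2 s2') /\ R s1' s2' /\ B m1 m2) /\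
  (forall ps1, Unfold s1 (Ext ps1) ->
     exists ps2, Unfold s2 (Ext ps2) /\
       forall l c1, In (l, c1) ps1 -> exists c2, In (l, c2) ps2 /\ R c1 c2) /\
  (forall ps1, Unfold s1 (Int ps1) ->
     exists ps2, Unfold s2 (Int ps2) /\
       forall l c2, In (l, c2) ps2 -> exists c1, In (l, c1) ps1 /\ R c1 c2).

(* sigma1 ≼_B sigma2 : membership in the greatest R ⊆ SC^2 with R ⊆ S(R,B) *)
Definition synpre (B : contract -> contract -> Prop) (s1 s2 : contract) : Prop :=
  exists R, (forall a b, R a b -> SC a /\ SC b) /\
            (forall a b, R a b -> Sfun R B a b) /\ R s1 s2.

End Contracts.

From Stdlib Require Import List Arith Bool Lia Classical.
Import ListNotations.

Set Implicit Arguments.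
Unset Strict Implicit.

(* The relation "r complies with some σ that is ≼-related to s2, up to unfolding
   recursion in s2" is a compliance relation.  When s2 synchronises with r,
   compliance of r with σ forces r to synchronise with the matching head of σ too,
   so the continuations stay related; an internal choice made by s2 is one that σ
   already offers.  If r || s2 were stuck while s2 cannot terminate, transitivity
   of ≤b and of B would turn the synchronisation that compliance forces on r || σ
   into one of r || s2. *)

Section Syntax.
Context {BT L : Type}.
Local Notation C := (@contract BT L).

Section NestedInduction.
Variable P : C -> Prop.
Hypotheses (P_One : P One)
  (P_InT : forall b s, P s -> P (InT b s))
  (P_OutT : forall b s, P s -> P (OutT b s))
  (P_OutS : forall m s, P m -> P s -> P (OutS m s))
  (P_InS : forall m s, P m -> P s -> P (InS m s))
  (P_Ext : forall ps, Forall (fun p => P (snd p)) ps -> P (Ext ps))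
  (P_Int : forall ps, Forall (fun p => P (snd p)) ps -> P (Int ps))
  (P_Mu : forall x s, P s -> P (Mu x s))
  (P_Var : forall x, P (Var x)).

Fixpoint contract_nested_ind (t : C) : P t :=
  let fix branches (ps : list (L * C)) : Forall (fun p => P (snd p)) ps :=
    match ps with
    | [] => Forall_nil _
    | p :: q => Forall_cons p (contract_nested_ind (snd p)) (branches q)
    end in
  match t with
  | One => P_One
  | InT b s => P_InT b (contract_nested_ind s)
  | OutT b s => P_OutT b (contract_nested_ind s)
  | OutS m s => P_OutS (contract_nested_ind m) (contract_nested_ind s)
  | InS m s => P_InS (contract_nested_ind m) (contract_nested_ind s)
  | Ext ps => P_Ext (branches ps)
  | Int ps => P_Int (branches ps)
  | Mu x s => P_Mu x (contract_nested_ind s)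
  | Var x => P_Var x
  end.
End NestedInduction.

Lemma guarded_wf_branches (ps : list (L * C)) :
  fold_right (fun p acc => guarded_wf (snd p) /\ acc) True ps <->
  Forall (fun p => guarded_wf (snd p)) ps.
Proof.
  induction ps as [|p ps IH]; simpl; split; intros H; auto.
  - destruct H; constructor; auto; apply IH; auto.
  - inversion H; subst; split; auto; apply IH; auto.
Qed.

Lemma unguarded_occurs_free (t : C) x :
  unguarded x t = true -> occurs_free x t = true.
Proof.
  induction t as [| | | | | | |y s IH|y]; simpl; try discriminate; auto.
  destruct (x =? y); [discriminate | exact IH].
Qed.

Lemma occurs_free_subst (u : C) x t y :
  closed u -> occurs_free y t = false \/ y = x -> occurs_free y (subst u x t) = false.
Proof.
  intros Hu. induction t using contract_nested_ind; intros Hy; simpl in *; auto.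
  - destruct Hy as [Hy|Hy]; [apply orb_false_iff in Hy as []|];
      rewrite IHt1, IHt2; auto.
  - destruct Hy as [Hy|Hy]; [apply orb_false_iff in Hy as []|];
      rewrite IHt1, IHt2; auto.
  - revert Hy; induction H as [|p ps Hp _ IH]; simpl; intros Hy; auto.
    destruct Hy as [Hy|Hy]; [apply orb_false_iff in Hy as []|]; rewrite Hp, IH; auto.
  - revert Hy; induction H as [|p ps Hp _ IH]; simpl; intros Hy; auto.
    destruct Hy as [Hy|Hy]; [apply orb_false_iff in Hy as []|]; rewrite Hp, IH; auto.
  - destruct (x =? x0) eqn:E; simpl; destruct (y =? x0) eqn:E2; auto.
    apply Nat.eqb_eq in E; apply Nat.eqb_neq in E2; subst x0.
    destruct Hy as [Hy|Hy]; [exact Hy | contradiction].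
  - destruct (x =? x0) eqn:E; [apply Hu|]; simpl.
    destruct (y =? x0) eqn:E2; auto.
    apply Nat.eqb_eq in E2; apply Nat.eqb_neq in E; subst x0.
    destruct Hy as [Hy|Hy]; [discriminate | lia].
Qed.

Lemma unguarded_subst (u : C) x t z :
  closed u -> unguarded z t = false -> unguarded z (subst u x t) = false.
Proof.
  intros Hu. induction t as [| | | | | | |y s IH|y]; simpl; intros H; auto.
  - destruct (x =? y); simpl; auto. destruct (z =? y); auto.
  - destruct (x =? y); auto. destruct (unguarded z u) eqn:E; auto.
    apply unguarded_occurs_free in E. rewrite Hu in E; discriminate.
Qed.

Lemma guarded_wf_subst (u : C) x t :
  closed u -> guarded_wf u -> guarded_wf t -> guarded_wf (subst u x t).
Proof.
  intros Hu Hg. induction t using contract_nested_ind; intros Ht; simpl in *; auto;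
    try (destruct Ht; split; auto; fail).
  1, 2: destruct Ht as (Hne & Hnd & Hbr); split; [destruct ps; simpl; congruence|];
    split; [rewrite map_map; exact Hnd|];
    rewrite guarded_wf_branches, Forall_forall in *; intros p Hp;
    apply in_map_iff in Hp as (q & <- & Hq); apply H; auto.
  - destruct (x =? x0); simpl; auto. destruct Ht; split; auto.
    apply unguarded_subst; auto.
  - destruct (x =? x0); simpl; auto.
Qed.

Fixpoint mu_depth (t : C) : nat :=
  match t with Mu _ s => S (mu_depth s) | _ => 0 end.

Lemma mu_depth_subst (u : C) x t :
  unguarded x t = false -> mu_depth (subst u x t) = mu_depth t.
Proof.
  induction t as [| | | | | | |y s IH|y]; simpl; intros H; auto.
  - destruct (x =? y); simpl; auto.
  - rewrite H; reflexivity.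
Qed.

Lemma SC_unfold_mu x (s : C) : SC (Mu x s) -> SC (subst (Mu x s) x s).
Proof.
  intros [Hc Hg]. split.
  - intros y. apply occurs_free_subst; auto. specialize (Hc y). simpl in Hc.
    destruct (y =? x) eqn:E; [right; apply Nat.eqb_eq; auto | left; auto].
  - apply guarded_wf_subst; auto. apply Hg.
Qed.

(* Guardedness makes [mu_depth] drop at each unfolding, so [Unfold] is total on [SC]. *)
Lemma Unfold_exists (a : C) : SC a -> exists u, Unfold a u.
Proof.
  remember (mu_depth a) as n eqn:En. revert a En.
  induction n as [n IH] using lt_wf_ind; intros a En Ha.
  destruct a as [| | | | | | |y s|];
    try (eexists; apply Unfold_other; intros; discriminate).
  destruct (IH (mu_depth (subst (Mu y s) y s))) with (a := subst (Mu y s) y s)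
    as [u Hu]; auto.
  - rewrite mu_depth_subst by apply (proj2 Ha). simpl in En; lia.
  - apply SC_unfold_mu; auto.
  - exists u; constructor; auto.
Qed.

Lemma Unfold_det (t u1 u2 : C) : Unfold t u1 -> Unfold t u2 -> u1 = u2.
Proof.
  intros H; revert u2; induction H; intros u2 H2; inversion H2; subst; auto.
  - exfalso; eapply H0; eauto.
  - exfalso; eapply H; eauto.
Qed.

Lemma Unfold_not_Mu (t u : C) : Unfold t u -> forall x s, u <> Mu x s.
Proof. induction 1; auto. Qed.

Lemma SC_Unfold (t u : C) : Unfold t u -> SC t -> SC u.
Proof. induction 1; auto using SC_unfold_mu. Qed.

Lemma SC_Int_single l (c : C) : SC c -> SC (Int [(l, c)]).
Proof.
  intros [Hc Hg]; split.
  - intros y; simpl; rewrite Hc; reflexivity.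
  - simpl; split; [congruence | split; [constructor; [simpl; tauto | constructor] | tauto]].
Qed.

Lemma NoDup_fst_In_eq (ps : list (L * C)) l c c' :
  NoDup (map fst ps) -> In (l, c) ps -> In (l, c') ps -> c = c'.
Proof.
  induction ps as [|[l0 c0] ps IH]; simpl; intros Hnd H1 H2; [contradiction|].
  inversion Hnd as [|? ? Hn Hnd']; subst.
  destruct H1 as [E1|H1], H2 as [E2|H2]; try congruence; [..|eauto].
  all: exfalso; apply Hn; apply in_map_iff.
  - inversion E1; subst; eexists; split; [|eassumption]; reflexivity.
  - inversion E2; subst; eexists; split; [|eassumption]; reflexivity.
Qed.

Lemma Int_single_of_no_tau (ps : list (L * C)) :
  ps <> [] -> (forall x, ~ step (Int ps) Tau x) -> exists l c, ps = [(l, c)].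
Proof.
  intros Hne Hn. destruct ps as [|[l c] [|q ps]]; [contradiction | eauto |].
  exfalso; eapply Hn; apply st_int; [simpl; lia | left; reflexivity].
Qed.

Lemma step_visible_det (r r' x : C) a b :
  step r a r' -> a <> Tau -> (forall l, a <> AInL l) -> step r b x -> b = a /\ x = r'.
Proof.
  intros Ha Hnt Hnl Hb.
  destruct Ha; [..| congruence | exfalso; eapply Hnl; reflexivity | congruence];
    inversion Hb; subst; auto; simpl in *; lia.
Qed.

Inductive mu_reach (b : C) : C -> Prop :=
| mu_reach_refl : mu_reach b b
| mu_reach_unfold : forall x s, mu_reach b (Mu x s) -> mu_reach b (subst (Mu x s) x s).

Lemma SC_mu_reach (b t : C) : mu_reach b t -> SC b -> SC t.
Proof. induction 1; auto using SC_unfold_mu. Qed.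

Lemma mu_reach_Unfold (b t u : C) : mu_reach b t -> Unfold t u -> Unfold b u.
Proof. induction 1; auto using Unfold_mu. Qed.

End Syntax.

Section Compliance.
Context {BT L : Type}.
Local Notation C := (@contract BT L).
Variable leb : BT -> BT -> Prop.
Variable B : C -> C -> Prop.

Lemma compliant_SC (r s : C) : compliant leb B r s -> SC r /\ SC s.
Proof. intros (R & [HSC _] & HR); auto. Qed.

Lemma compliant_par_tau (r s r' s' : C) :
  compliant leb B r s -> par_tau leb B r s r' s' -> compliant leb B r' s'.
Proof.
  intros (R & [HSC HR] & Hrs) Hp. exists R; split; [split; auto|].
  exact (proj2 (HR _ _ Hrs) _ _ Hp).
Qed.

Lemma compliant_stuck (r s : C) :
  compliant leb B r s -> (forall r' s', ~ par_tau leb B r s r' s') ->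
  (exists r1, step r Chk r1) /\ (exists s1, step s Chk s1).
Proof. intros (R & [_ HR] & Hrs). exact (proj1 (HR _ _ Hrs)). Qed.

Lemma compliant_progress (r u : C) :
  compliant leb B r u -> (forall u1, ~ step u Chk u1) ->
  exists r' u', par_tau leb B r u r' u'.
Proof.
  intros Hc Hn. apply NNPP; intros Hstuck.
  destruct (compliant_stuck Hc) as [_ [u1 Hu1]]; [|exact (Hn u1 Hu1)].
  intros r' u' Hp; apply Hstuck; eauto.
Qed.

Lemma compliant_Unfold (r a u : C) :
  compliant leb B r a -> Unfold a u -> compliant leb B r u.
Proof.
  intros Hc Hu; revert Hc; induction Hu; auto.
  intros Hc; apply IHHu. eapply compliant_par_tau; [exact Hc|]. apply pt_right, st_mu.
Qed.

Lemma compliant_Int_pick (r : C) ps l c :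
  compliant leb B r (Int ps) -> In (l, c) ps -> compliant leb B r (Int [(l, c)]).
Proof.
  intros Hc Hin. destruct ps as [|p [|q ps']]; [destruct Hin | |].
  - destruct Hin as [<-|[]]; exact Hc.
  - eapply compliant_par_tau; [exact Hc|]. apply pt_right, st_int; [simpl; lia | exact Hin].
Qed.

(* An action other than [Tau] and label input is the only move of [r]. *)
Lemma compliant_forces_sync (r r' u : C) a :
  compliant leb B r u -> step r a r' -> a <> Tau -> (forall l, a <> AInL l) ->
  (forall x, ~ step u Tau x) -> (forall x, ~ step u Chk x) ->
  exists a2 u', step u a2 u' /\ dual leb B a a2 /\ compliant leb B r' u'.
Proof.
  intros Hc Hr Hnt Hnl Hut Huc.
  destruct (compliant_progress Hc Huc) as (r1 & u1 & Hp).
  inversion Hp as [? ? ? Hr1 | ? ? ? Hu1 | ? ? ? ? a1 a2 Hr1 Hu1 Hd]; subst.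
  - destruct (step_visible_det Hr Hnt Hnl Hr1); congruence.
  - destruct (Hut _ Hu1).
  - destruct (step_visible_det Hr Hnt Hnl Hr1); subst.
    exists a2, u1; split; [exact Hu1 | split; [exact Hd|]].
    eapply compliant_par_tau; [exact Hc | exact Hp].
Qed.

Section HeadSimulation.
Hypothesis leb_trans : forall t1 t2 t3, leb t1 t2 -> leb t2 t3 -> leb t1 t3.
Hypothesis B_trans : forall a b c, B a b -> B b c -> B a c.
Variable P : C -> C -> Prop.

(* One clause of [Sfun P B] read on the unfolded heads of the two contracts. *)
Inductive head_sim : C -> C -> Prop :=
| head_sim_One : head_sim One One
| head_sim_InT t1 t2 s1 s2 : leb t1 t2 -> P s1 s2 -> head_sim (InT t1 s1) (InT t2 s2)
| head_sim_OutT t1 t2 s1 s2 : leb t2 t1 -> P s1 s2 -> head_sim (OutT t1 s1) (OutT t2 s2)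
| head_sim_OutS m1 m2 s1 s2 : B m2 m1 -> P s1 s2 -> head_sim (OutS m1 s1) (OutS m2 s2)
| head_sim_InS m1 m2 s1 s2 : B m1 m2 -> P s1 s2 -> head_sim (InS m1 s1) (InS m2 s2)
| head_sim_Ext ps1 ps2 :
    (forall l c1, In (l, c1) ps1 -> exists c2, In (l, c2) ps2 /\ P c1 c2) ->
    head_sim (Ext ps1) (Ext ps2)
| head_sim_Int ps1 ps2 :
    (forall l c2, In (l, c2) ps2 -> exists c1, In (l, c1) ps1 /\ P c1 c2) ->
    head_sim (Int ps1) (Int ps2).

Lemma head_sim_of_Sfun (a b ua ub : C) :
  Sfun leb P B a b -> Unfold a ua -> Unfold b ub -> closed ua -> head_sim ua ub.
Proof.
  intros (S1 & S2 & S3 & S4 & S5 & S6 & S7) Hua Hub Hcl.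
  destruct ua as [| | | | | | |x s|x].
  - rewrite (Unfold_det Hub (S1 Hua)); constructor.
  - destruct (S2 _ _ Hua) as (? & ? & Hu & ? & ?); rewrite (Unfold_det Hub Hu); constructor; auto.
  - destruct (S3 _ _ Hua) as (? & ? & Hu & ? & ?); rewrite (Unfold_det Hub Hu); constructor; auto.
  - destruct (S4 _ _ Hua) as (? & ? & Hu & ? & ?); rewrite (Unfold_det Hub Hu); constructor; auto.
  - destruct (S5 _ _ Hua) as (? & ? & Hu & ? & ?); rewrite (Unfold_det Hub Hu); constructor; auto.
  - destruct (S6 _ Hua) as (? & Hu & ?); rewrite (Unfold_det Hub Hu); constructor; auto.
  - destruct (S7 _ Hua) as (? & Hu & ?); rewrite (Unfold_det Hub Hu); constructor; auto.
  - destruct (Unfold_not_Mu Hua eq_refl).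
  - specialize (Hcl x); simpl in Hcl; rewrite Nat.eqb_refl in Hcl; discriminate.
Qed.

Lemma head_sim_Int_single l (c1 c2 : C) :
  P c1 c2 -> head_sim (Int [(l, c1)]) (Int [(l, c2)]).
Proof.
  intros HP; constructor; intros l' c [E|[]]; inversion E; subst.
  exists c1; split; [left|]; auto.
Qed.

Lemma compliant_head_sim_Int (r : C) ps1 ps2 l c2 :
  compliant leb B r (Int ps1) -> head_sim (Int ps1) (Int ps2) -> In (l, c2) ps2 ->
  exists c1, compliant leb B r (Int [(l, c1)]) /\ P c1 c2.
Proof.
  intros Hc Hsim Hin; inversion Hsim as [| | | | | |? ? Hbr]; subst.
  destruct (Hbr _ _ Hin) as (c1 & Hin1 & HP).
  exists c1; split; [exact (compliant_Int_pick Hc Hin1) | exact HP].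
Qed.

(* If the server [t] cannot move alone, its internal choice is a single branch,
   so the client may as well face the matching single branch of [u]. *)
Lemma head_sim_no_tau (r u t : C) :
  compliant leb B r u -> head_sim u t -> SC t -> (forall x, ~ step t Tau x) ->
  exists u0, compliant leb B r u0 /\ head_sim u0 t /\ forall x, ~ step u0 Tau x.
Proof.
  intros Hc Hsim HSC Hnt.
  destruct Hsim as [| | | | | |ps1 ps2 Hbr];
    try solve [eexists; split; [eassumption | split; [econstructor; eassumption |
                                                       intros x Hx; inversion Hx]]].
  destruct (Int_single_of_no_tau (proj1 (proj2 HSC)) Hnt) as (l & c2 & ->).
  destruct (compliant_head_sim_Int Hc (head_sim_Int Hbr) (or_introl eq_refl))
    as (c1 & Hc1 & HP).
  exists (Int [(l, c1)]); split; [exact Hc1 | split; [exact (head_sim_Int_single l HP)|]].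
  intros x Hx; inversion Hx; simpl in *; lia.
Qed.

(* Transitivity of [leb] and [B] carries a synchronisation with [u] over to [t]. *)
Lemma head_sim_dual_step (u u' t : C) a a1 :
  head_sim u t -> SC t -> (forall x, ~ step t Tau x) ->
  step u a1 u' -> dual leb B a a1 -> exists a2 t', step t a2 t' /\ dual leb B a a2.
Proof.
  intros Hsim HSC Hnt Hu Hd.
  destruct Hsim as [|t1 t2 ? s2 ? _|t1 t2 ? s2 ? _|m1 m2 ? s2 ? _|m1 m2 ? s2 ? _|ps1 ps2 Hbr
                   |ps1 ps2 Hbr];
    inversion Hu; subst; destruct a; simpl in Hd; try contradiction.
  - exists (AInT t2), s2; split; [constructor | simpl; eauto].
  - exists (AOutT t2), s2; split; [constructor | simpl; eauto].
  - exists (AOutS m2), s2; split; [constructor | simpl; eauto].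
  - exists (AInS m2), s2; split; [constructor | simpl; eauto].
  - match goal with Hin : In _ ps1 |- _ => destruct (Hbr _ _ Hin) as (c2 & Hin2 & _) end.
    subst; exists (AInL l), c2; split; [constructor; exact Hin2 | reflexivity].
  - destruct (Int_single_of_no_tau (proj1 (proj2 HSC)) Hnt) as (l' & c2 & ->).
    destruct (Hbr _ _ (or_introl eq_refl)) as (c1 & [E|[]] & _); inversion E; subst.
    eexists _, c2; split; [apply st_outL | reflexivity].
Qed.

Lemma head_sim_sync (r r' u t t' : C) a a2 :
  compliant leb B r u -> head_sim u t -> SC t ->
  step r a r' -> step t a2 t' -> dual leb B a a2 ->
  exists c, compliant leb B r' c /\ P c t'.
Proof.
  intros Hc Hsim HSC Hr Ht Hd.
  assert (Hforce : forall u', compliant leb B r u' -> (forall l, a <> AInL l) ->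
            (forall x, ~ step u' Tau x) -> (forall x, ~ step u' Chk x) ->
            exists a1 u1, step u' a1 u1 /\ dual leb B a a1 /\ compliant leb B r' u1).
  { intros u' Hc' Hnl Hut Huc. apply (compliant_forces_sync Hc' Hr); auto.
    intros ->; destruct a2; contradiction. }
  destruct Hsim as [|? ? c1 ? ? HP|? ? c1 ? ? HP|? ? c1 ? ? HP|? ? c1 ? ? HP|ps1 ps2 Hbr
                   |ps1 ps2 Hbr];
    inversion Ht; subst; destruct a; simpl in Hd; try contradiction;
    try (destruct (Hforce _ Hc ltac:(discriminate) ltac:(intros ? Hx; inversion Hx)
                                     ltac:(intros ? Hx; inversion Hx))
           as (? & u1 & Hu & _ & Hc1);
         inversion Hu; subst; eexists; split; [exact Hc1 | exact HP]).
  - subst. destruct (Hforce _ Hc ltac:(discriminate) ltac:(intros ? Hx; inversion Hx)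
                                     ltac:(intros ? Hx; inversion Hx))
      as (a1 & u1 & Hu & Hd1 & Hc1).
    inversion Hu; subst; simpl in Hd1; subst.
    match goal with Hin : In (_, u1) ps1 |- _ => destruct (Hbr _ _ Hin) as (c2 & Hin2 & HP) end.
    exists u1; split; [exact Hc1|].
    match goal with Hin : In (_, t') ps2 |- _ => rewrite (NoDup_fst_In_eq (proj1 (proj2 (proj2 HSC))) Hin Hin2) end.
    exact HP.
  - destruct (Hbr _ _ (or_introl eq_refl)) as (c1 & Hin1 & HP).
    exists c1; split; [|exact HP].
    eapply compliant_par_tau; [exact (compliant_Int_pick Hc Hin1)|].
    eapply pt_sync; [exact Hr | apply st_outL | exact Hd].
Qed.

Lemma head_sim_stuck (r u t : C) :
  compliant leb B r u -> head_sim u t -> SC t ->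
  (forall r' t', ~ par_tau leb B r t r' t') ->
  (exists r1, step r Chk r1) /\ (exists t1, step t Chk t1).
Proof.
  intros Hc Hsim HSC Hstuck.
  assert (Hnt : forall x, ~ step t Tau x) by (intros x Hx; eapply Hstuck, pt_right, Hx).
  destruct (head_sim_no_tau Hc Hsim HSC Hnt) as (u0 & Hc0 & Hsim0 & Hu0).
  destruct (classic (exists x, step u0 Chk x)) as [[x Hx] | Hnc].
  - inversion Hx; subst; inversion Hsim0; subst. exact (compliant_stuck Hc0 Hstuck).
  - exfalso. destruct (compliant_progress Hc0 (fun x Hx => Hnc (ex_intro _ x Hx)))
      as (r1 & u1 & Hp).
    inversion Hp as [? ? ? Hr1 | ? ? ? Hu1 | ? ? ? ? a1 a2 Hr1 Hu1 Hd]; subst.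
    + eapply Hstuck, pt_left, Hr1.
    + exact (Hu0 _ Hu1).
    + destruct (head_sim_dual_step Hsim0 HSC Hnt Hu1 Hd) as (a3 & t' & Ht & Hd').
      eapply Hstuck, pt_sync; eassumption.
Qed.

End HeadSimulation.

Section SimulatedCompliance.
Hypothesis leb_trans : forall t1 t2 t3, leb t1 t2 -> leb t2 t3 -> leb t1 t3.
Hypothesis B_trans : forall a b c, B a b -> B b c -> B a c.
Variable P : C -> C -> Prop.
Hypothesis P_SC : forall a b, P a b -> SC a /\ SC b.
Hypothesis P_Sfun : forall a b, P a b -> Sfun leb P B a b.

(* The second disjunct is needed after [t] resolves an internal choice: the
   client then faces a single branch of [u], which need not be [P]-related. *)
Definition sim_compliant (r t : C) : Prop :=
  (exists a b, compliant leb B r a /\ P a b /\ mu_reach b t) \/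
  (exists u, compliant leb B r u /\ head_sim P u t /\ SC t).

Lemma sim_compliant_head (r u t : C) :
  compliant leb B r u -> head_sim P u t -> SC t ->
  ((forall r' t', ~ par_tau leb B r t r' t') ->
     (exists r1, step r Chk r1) /\ (exists t1, step t Chk t1)) /\
  (forall r' t', par_tau leb B r t r' t' -> sim_compliant r' t').
Proof.
  intros Hc Hsim HSC. split; [exact (head_sim_stuck leb_trans B_trans Hc Hsim HSC)|].
  intros r' t' Hp.
  inversion Hp as [? ? ? Hr | ? ? ? Ht | ? ? ? ? a1 a2 Hr Ht Hd]; subst.
  - right; exists u; split; [exact (compliant_par_tau Hc (pt_left _ _ _ Hr)) | auto].
  - inversion Ht as [| | | | | | ps2 l c2 _ Hin | |]; subst; inversion Hsim; subst.
    destruct (compliant_head_sim_Int Hc Hsim Hin) as (c1 & Hc1 & HP).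
    right; exists (Int [(l, c1)]); split; [exact Hc1 | split].
    + exact (head_sim_Int_single l HP).
    + exact (SC_Int_single l (proj2 (P_SC HP))).
  - destruct (head_sim_sync Hc Hsim HSC Hr Ht Hd) as (c & Hc' & HP).
    left; exists c, t'; repeat split; [exact Hc' | exact HP | constructor].
Qed.

Lemma sim_compliant_rel : compliance_rel leb B sim_compliant.
Proof.
  split.
  { intros r t [(a & b & Hc & HP & Hb) | (u & Hc & _ & HSC)];
      split; try exact (proj1 (compliant_SC Hc)); auto.
    exact (SC_mu_reach Hb (proj2 (P_SC HP))). }
  intros r t [(a & b & Hc & HP & Hb) | (u & Hc & Hsim & HSC)];
    [| exact (sim_compliant_head Hc Hsim HSC)].
  destruct (classic (exists x s, t = Mu x s)) as [(x & s & ->) | Hnmu].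
  - split.
    + intros Hstuck; exfalso; eapply Hstuck, pt_right, st_mu.
    + intros r' t' Hp; left.
      inversion Hp as [? ? ? Hr | ? ? ? Ht | ? ? ? ? a1 a2 Hr Ht Hd]; subst.
      * exists a, b; repeat split; [exact (compliant_par_tau Hc (pt_left _ _ _ Hr)) | auto | auto].
      * inversion Ht; subst; exists a, b; repeat split; auto; constructor; exact Hb.
      * inversion Ht; subst; destruct a1; contradiction.
  - assert (Hnmu' : forall x s, t <> Mu x s) by (intros x s E; eauto).
    destruct (P_SC HP) as [HSCa HSCb].
    destruct (Unfold_exists HSCa) as [ua Hua].
    apply (sim_compliant_head (u := ua)).
    + exact (compliant_Unfold Hc Hua).
    + apply (head_sim_of_Sfun (P_Sfun HP) Hua (mu_reach_Unfold Hb (Unfold_other Hnmu'))).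
      exact (proj1 (SC_Unfold Hua HSCa)).
    + exact (SC_mu_reach Hb HSCb).
Qed.

End SimulatedCompliance.
End Compliance.

Theorem mainTheorem4 (BT L : Type) (leb : BT -> BT -> Prop)
  (leb_refl : forall t, leb t t)
  (leb_trans : forall t1 t2 t3, leb t1 t2 -> leb t2 t3 -> leb t1 t3)
  (B : @contract BT L -> @contract BT L -> Prop)
  (B_SC : forall a b, B a b -> SC a /\ SC b)
  (B_trans : forall a b c, B a b -> B b c -> B a c)
  (s1 s2 : @contract BT L) :
  SC s1 -> SC s2 -> synpre leb B s1 s2 -> subcontract leb B s1 s2.
Proof.
  intros _ _ (P & P_SC & P_Sfun & Hs12) r _ Hr.
  exists (sim_compliant leb B P); split.
  - exact (sim_compliant_rel leb_trans B_trans P_SC P_Sfun).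
  - left; exists s1, s2; repeat split; [exact Hr | exact Hs12 | constructor].
Qed.
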